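(* Let $(t_j^i)_{0\le j\le i}$ be real numbers and let $h_{j,k}^i$ ($0\le k\le i$, $0\le j\le i-k$) be defined by $h_{j,0}^i=t_j^i$ and $h_{j,k}^i=h_{j,k-1}^{i-1}+h_{j,k-1}^{i}+h_{j+1,k-1}^{i}$ for $k\ge 1$. Suppose that $t^i_{j}=t^{i-1}_{j-1}+t^{i-1}_{j}$ whenever $i\ge 2$ and $1\leq j\leq i-1$. Then for any $i,j,k$ with $0\leq k+2 \leq i$ and $1\leq j \leq i-1-k$, $$h^i_{j,k}=h^{i-1}_{j-1,k}+h^{i-1}_{j,k}.$$ *)

From Stdlib Require Import Reals Lra Lia.
Open Scope R_scope.

(* The function is total; on the paper's domain (0<=k<=i, 0<=j<=i-k) every
   recursive call stays inside the domain, so it agrees with the paper. *)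
Fixpoint h (t : nat -> nat -> R) (i j k : nat) {struct k} : R :=
  match k with
  | O => t i j
  | S k' => h t (i - 1)%nat j k' + h t i j k' + h t i (S j) k'
  end.

(* Each step [k -> k+1] of the recursion defining [h] applies the linear operator
   [f |-> f(i-1,j) + f(i,j) + f(i,j+1)], built from shifts in [i] and [j]; shifts
   commute with the Pascal relation [f(i,j) = f(i-1,j-1) + f(i-1,j)], so the
   relation satisfied by [t] propagates to every level [k] by induction. *)
From Stdlib Require Import Reals Lra Lia.
Open Scope R_scope.

Definition pascal (f : nat -> nat -> R) (i j : nat) : Prop :=
  f i j = f (i - 1)%nat (j - 1)%nat + f (i - 1)%nat j.

Definition h_step (f : nat -> nat -> R) (i j : nat) : R :=
  f (i - 1)%nat j + f i j + f i (S j).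

Lemma pascal_h_step (f : nat -> nat -> R) (i j : nat) :
  (1 <= j)%nat -> pascal f i j -> pascal f (i - 1) j -> pascal f i (S j) ->
  pascal (h_step f) i j.
Proof.
  intros Hj Hij Hi1j HiSj.
  unfold pascal, h_step in *.
  replace (S (j - 1)) with j in * by lia.
  replace (S j - 1)%nat with j in HiSj by lia.
  lra.
Qed.

Theorem theorem4 (t : nat -> nat -> R)
  (Ht : forall i j : nat, (2 <= i)%nat -> (1 <= j)%nat -> (j <= i - 1)%nat ->
        t i j = t (i - 1)%nat (j - 1)%nat + t (i - 1)%nat j) :
  forall i j k : nat, (k + 2 <= i)%nat -> (1 <= j)%nat -> (j <= i - 1 - k)%nat ->
    h t i j k = h t (i - 1)%nat (j - 1)%nat k + h t (i - 1)%nat j k.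
Proof.
  intros i j k; revert i j.
  induction k as [|k IH]; intros i j Hi Hj1 Hj2.
  - apply Ht; lia.
  - change (pascal (h_step (fun a b => h t a b k)) i j).
    apply pascal_h_step; [lia | apply IH; lia ..].
Qed.
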